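(* Let $g_1,\dots,g_r\in\mathbb R[X_1,\dots,X_n]$, $S=\mathcal S(\mathbf g)$, and assume the CQC holds at $z\in S$. Then there exist $\epsilon''=\epsilon''(z)>0$ and $\mathfrak c''=\mathfrak c''(z)>0$ such that for all $y\in[-1,1]^n$ with $D(y)=\operatorname{dist}(y,S)=\|y-z\|_2$ and $D(y)\le\epsilon''$, we have $D(y)\le\mathfrak c''\,G(y)$.
   Context: $\mathcal S(\mathbf g)=\{x:g_i(x)\ge0\ \forall i\}$; $G(y)=|\min\{g_1(y),\dots,g_r(y),0\}|$, $D(y)=\operatorname{dist}(y,S)$ (Euclidean) on $[-1,1]^n$. Active constraints at $z$: the $g_i$ with $g_i(z)=0$; CQC at $z$: the gradients of the active constraints at $z$ are linearly independent. *)

From HB Require Import structures.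
From mathcomp Require Import all_boot all_order all_algebra.
From mathcomp Require Import classical_sets reals.
From mathcomp Require Import mpoly.
Set Implicit Arguments. Unset Strict Implicit. Unset Printing Implicit Defensive.
Import Order.TTheory GRing.Theory Num.Theory.
Local Open Scope ring_scope.
Local Open Scope classical_set_scope.

Section Defs.
Variables (R : realType) (n r : nat).
Implicit Types (g : 'I_r -> {mpoly R[n]}) (x y z : 'I_n -> R).

Definition dist2 x y : R := Num.sqrt (\sum_(k < n) (x k - y k) ^+ 2).

Definition semialg g : set ('I_n -> R) := [set x | forall i, 0 <= (g i).@[x]].

Definition Dist g y : R := inf [set dist2 y x | x in semialg g].

Definition Gviol g y : R := `| \big[Num.min/0]_(i < r) (g i).@[y] |.

Definition grad (p : {mpoly R[n]}) z : 'rV[R]_n :=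
  \row_(k < n) (mderiv k p).@[z].

Definition CQC g z : Prop :=
  free [seq grad (g i) z | i <- enum 'I_r & (g i).@[z] == 0].

Definition in_cube y : Prop := forall k, -1 <= y k <= 1.

End Defs.

From HB Require Import structures.
From mathcomp Require Import all_boot all_order all_algebra.
From mathcomp Require Import classical_sets reals.
From mathcomp Require Import mpoly.
From mathcomp Require Import ring lra.
Set Implicit Arguments. Unset Strict Implicit. Unset Printing Implicit Defensive.
Import Order.TTheory GRing.Theory Num.Theory.
Local Open Scope ring_scope.

(* Linear independence of the active gradients gives a direction w with
   grad g_i(z) . w = 1 for every active constraint.  From a point y close to z,
   step along w by s = 4 G(y): by a second-order Taylor estimate an active g_i
   becomes at least -G + s/2 - C s^2 >= 0, and the inactive g_i, positive at z,
   stay nonnegative by Lipschitz continuity.  So y + s w lies in S and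
   D(y) <= s |w|_1 = 4 |w|_1 G(y).  The hypothesis D(y) = |y - z| only serves
   to make y close to z. *)

Lemma uniform_bound (R : realDomainType) (I : finType) (P : I -> R -> Prop) :
  (forall i a b, a <= b -> P i a -> P i b) -> (forall i, exists a, P i a) ->
  exists a, 0 <= a /\ forall i, P i a.
Proof.
move=> Pmono /fin_all_exists [a Pa]; exists (\big[Num.max/0]_i a i).
by split=> [|i]; [exact: bigmax_ge_id | apply: Pmono (Pa i); exact: le_bigmax].
Qed.

Lemma mpoly_ring_ind (R : nzRingType) n (P : {mpoly R[n]} -> Prop) :
  (forall c, P c%:MP) -> (forall i, P 'X_i) ->
  (forall p q, P p -> P q -> P (p + q)) -> (forall p q, P p -> P q -> P (p * q)) ->
  forall p, P p.
Proof.
move=> PC PX PD PM; elim/mpolyind => [|c m p _ _ Pp]; first by rewrite -mpolyC0.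
apply: PD => //; rewrite -mul_mpolyC mpolyXE_id; apply: (PM) => //.
apply: (big_ind P) => [|//|i _]; first by rewrite -mpolyC1.
by elim: (m i) => [|k IH]; rewrite ?expr0 -?mpolyC1 // exprS; apply: PM.
Qed.

Section Metric.
Variables (R : realDomainType) (n : nat).
Implicit Types (x y w : 'I_n -> R) (s : R).

Definition norm1 x : R := \sum_k `|x k|.
Definition dist1 x y : R := \sum_k `|x k - y k|.
Definition shift w y s : 'I_n -> R := fun k => y k + s * w k.

Lemma norm1_ge0 x : 0 <= norm1 x.
Proof. by apply: sumr_ge0 => k _. Qed.

Lemma dist1_ge0 x y : 0 <= dist1 x y.
Proof. by apply: sumr_ge0 => k _. Qed.

Lemma ler_dist1 x y k : `|x k - y k| <= dist1 x y.
Proof. by rewrite /dist1 (bigD1 k) //= lerDl; apply: sumr_ge0. Qed.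

Lemma dist1_shift w y s : dist1 y (shift w y s) = `|s| * norm1 w.
Proof.
rewrite /dist1 /norm1 mulr_sumr; apply: eq_bigr => k _.
by rewrite /shift opprD addNKr normrN normrM.
Qed.

Lemma dist1_shift_le w y z s :
  dist1 (shift w y s) z <= dist1 y z + `|s| * norm1 w.
Proof.
rewrite /dist1 /norm1 mulr_sumr -big_split; apply: ler_sum => k _.
by rewrite /shift addrAC -normrM ler_normD.
Qed.

End Metric.

Section Lipschitz.
Variables (R : realDomainType) (n : nat) (z : 'I_n -> R) (rho : R).
Hypothesis rho_ge0 : 0 <= rho.
Implicit Types (p q : {mpoly R[n]}) (x : 'I_n -> R).

Definition lipschitz_at p := exists L, 0 <= L /\
  forall x, dist1 x z <= rho -> `|p.@[x] - p.@[z]| <= L * dist1 x z.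

Lemma lipschitz_at_bounded p : lipschitz_at p ->
  exists M, 0 <= M /\ forall x, dist1 x z <= rho -> `|p.@[x]| <= M.
Proof.
move=> [L [L0 pL]]; exists (`|p.@[z]| + L * rho); split=> [|x xz].
  by rewrite addr_ge0 ?mulr_ge0.
rewrite -[p.@[x]](subrK p.@[z]) addrC; apply: le_trans (ler_normD _ _) _.
by rewrite lerD2l; apply: le_trans (pL x xz) _; rewrite ler_wpM2l.
Qed.

Lemma lipschitz_atC c : lipschitz_at c%:MP.
Proof. by exists 0; split=> // x _; rewrite !mevalC subrr normr0 mul0r. Qed.

Lemma lipschitz_atX i : lipschitz_at 'X_i.
Proof. by exists 1; split=> // x _; rewrite !mevalXU mul1r ler_dist1. Qed.

Lemma lipschitz_atD p q : lipschitz_at p -> lipschitz_at q -> lipschitz_at (p + q).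
Proof.
move=> [Lp [Lp0 pL]] [Lq [Lq0 qL]]; exists (Lp + Lq); split=> [|x xz].
  exact: addr_ge0.
rewrite !mevalD opprD addrACA mulrDl; apply: le_trans (ler_normD _ _) _.
exact: lerD (pL x xz) (qL x xz).
Qed.

Lemma lipschitz_atM p q : lipschitz_at p -> lipschitz_at q -> lipschitz_at (p * q).
Proof.
move=> pL qL; have [Mp [Mp0 pM]] := lipschitz_at_bounded pL.
move: pL qL => [Lp [Lp0 pL]] [Lq [Lq0 qL]].
exists (Mp * Lq + `|q.@[z]| * Lp); split=> [|x xz].
  by rewrite addr_ge0 ?mulr_ge0.
have -> : (p * q).@[x] - (p * q).@[z] =
    p.@[x] * (q.@[x] - q.@[z]) + q.@[z] * (p.@[x] - p.@[z]).
  by rewrite !mevalM; ring.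
rewrite mulrDl -!mulrA; apply: le_trans (ler_normD _ _) _.
by rewrite !normrM; apply: lerD; apply: ler_pM; rewrite ?pM ?pL ?qL.
Qed.

Lemma lipschitz_at_mpoly p : lipschitz_at p.
Proof.
elim/mpoly_ring_ind: p.
- exact: lipschitz_atC.
- exact: lipschitz_atX.
- exact: lipschitz_atD.
- exact: lipschitz_atM.
Qed.

Lemma meval_bounded p :
  exists M, 0 <= M /\ forall x, dist1 x z <= rho -> `|p.@[x]| <= M.
Proof. exact/lipschitz_at_bounded/lipschitz_at_mpoly. Qed.

End Lipschitz.

Lemma lipschitz_at_family (R : realDomainType) n (I : finType) (p : I -> {mpoly R[n]})
    (z : 'I_n -> R) (rho : R) : 0 <= rho ->
  exists L, 0 <= L /\ forall i x, dist1 x z <= rho ->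
    `|(p i).@[x] - (p i).@[z]| <= L * dist1 x z.
Proof.
move=> rho0; apply: uniform_bound => [i a b ab pa x xz | i].
  by apply: le_trans (pa x xz) _; rewrite ler_wpM2r ?dist1_ge0.
by have [L [_ pL]] := lipschitz_at_mpoly z rho0 (p i); exists L.
Qed.

Section Taylor.
Variables (R : realDomainType) (n : nat) (z w : 'I_n -> R).
Implicit Types (p q : {mpoly R[n]}) (y : 'I_n -> R) (s : R).

Definition dderiv p : {mpoly R[n]} := \sum_k w k *: mderiv k p.

Lemma dderivD p q : dderiv (p + q) = dderiv p + dderiv q.
Proof. by rewrite /dderiv -big_split; apply: eq_bigr => k _; rewrite mderivD scalerDr. Qed.

Lemma dderivM p q : dderiv (p * q) = dderiv p * q + p * dderiv q.
Proof.
rewrite /dderiv mulr_suml mulr_sumr -big_split; apply: eq_bigr => k _.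
by rewrite mderivM scalerDr scalerAl scalerAr.
Qed.

Lemma dderivC c : dderiv c%:MP = 0.
Proof. by rewrite /dderiv big1 // => k _; rewrite mderivC scaler0. Qed.

Lemma meval_dderiv p y : (dderiv p).@[y] = \sum_k w k * (mderiv k p).@[y].
Proof. by rewrite /dderiv raddf_sum; apply: eq_bigr => k _; exact: mevalZ. Qed.

Lemma meval_dderivX i y : (dderiv 'X_i).@[y] = w i.
Proof.
rewrite meval_dderiv (bigD1 i) //= big1 => [|k ki].
  rewrite mderivX mnm1E eqxx -[X in (X - _)%MM]add0m addmK mpolyX0 /=.
  by rewrite scale1r meval1 mulr1 addr0.
by rewrite mderivX mnm1E eq_sym (negbTE ki) mulr0n mevalZ !mul0r mulr0.
Qed.

Definition taylor_remainder p y s := p.@[shift w y s] - p.@[y] - s * (dderiv p).@[y].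

Lemma taylor_remainderD p q y s :
  taylor_remainder (p + q) y s = taylor_remainder p y s + taylor_remainder q y s.
Proof. by rewrite /taylor_remainder dderivD !mevalD; ring. Qed.

Lemma taylor_remainderM p q y s :
  taylor_remainder (p * q) y s =
    s ^+ 2 * ((dderiv p).@[y] * (dderiv q).@[y])
    + taylor_remainder q y s * (p.@[y] + s * (dderiv p).@[y])
    + taylor_remainder p y s * q.@[shift w y s].
Proof. by rewrite /taylor_remainder dderivM !mevalD !mevalM; ring. Qed.

Definition second_order p := exists C, 0 <= C /\ forall y s,
  dist1 y z <= 1 -> 0 <= s <= 1 -> `|taylor_remainder p y s| <= C * s ^+ 2.

Lemma second_orderC c : second_order c%:MP.
Proof.
exists 0; split=> // y s _ _.
by rewrite /taylor_remainder dderivC !mevalC subrr mulr0 subr0 normr0 mul0r.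
Qed.

Lemma second_orderX i : second_order 'X_i.
Proof.
exists 0; split=> // y s _ _.
rewrite /taylor_remainder meval_dderivX !mevalXU /shift.
by rewrite [y i + _]addrC addrK subrr normr0 mul0r.
Qed.

Lemma second_orderD p q : second_order p -> second_order q -> second_order (p + q).
Proof.
move=> [Cp [Cp0 pC]] [Cq [Cq0 qC]]; exists (Cp + Cq); split=> [|y s yz s01].
  exact: addr_ge0.
rewrite taylor_remainderD mulrDl; apply: le_trans (ler_normD _ _) _.
exact: lerD (pC y s yz s01) (qC y s yz s01).
Qed.

Lemma second_orderM p q : second_order p -> second_order q -> second_order (p * q).
Proof.
move=> [Cp [Cp0 pC]] [Cq [Cq0 qC]].
have [Mp [Mp0 pM]] := meval_bounded z ler01 p.
have [Mdp [Mdp0 dpM]] := meval_bounded z ler01 (dderiv p).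
have [Mdq [Mdq0 dqM]] := meval_bounded z ler01 (dderiv q).
(* q is also evaluated at shift w y s, which may leave the unit ball. *)
have [Mq [Mq0 qM]] := meval_bounded z (addr_ge0 ler01 (norm1_ge0 w)) q.
exists (Mdp * Mdq + Cq * (Mp + Mdp) + Cp * Mq).
split=> [|y s yz /[dup] s01 /andP[s0 s1]].
  by rewrite !addr_ge0 ?mulr_ge0 ?addr_ge0.
have xz : dist1 (shift w y s) z <= 1 + norm1 w.
  apply: le_trans (dist1_shift_le _ _ _ _) _; rewrite lerD // ger0_norm //.
  by rewrite ler_piMl ?norm1_ge0.
rewrite taylor_remainderM 2![in X in _ <= X]mulrDl; apply: le_trans (ler_normD _ _) _.
apply: lerD; first apply: le_trans (ler_normD _ _) _; first apply: lerD.
- rewrite normrM ger0_norm ?exprn_ge0 // mulrC ler_wpM2r ?exprn_ge0 // normrM.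
  by apply: ler_pM; rewrite ?dpM ?dqM.
- rewrite normrM mulrAC; apply: ler_pM; rewrite ?qC //.
  apply: le_trans (ler_normD _ _) _; rewrite lerD ?pM // normrM ger0_norm //.
  by rewrite -[Mdp]mul1r; apply: ler_pM; rewrite ?dpM.
- by rewrite normrM mulrAC; apply: ler_pM; rewrite ?pC ?qM.
Qed.

Lemma second_order_mpoly p : second_order p.
Proof.
elim/mpoly_ring_ind: p.
- exact: second_orderC.
- exact: second_orderX.
- exact: second_orderD.
- exact: second_orderM.
Qed.

End Taylor.

Lemma second_order_family (R : realDomainType) n (I : finType) (p : I -> {mpoly R[n]})
    (z w : 'I_n -> R) :
  exists C, 0 <= C /\ forall i y s, dist1 y z <= 1 -> 0 <= s <= 1 ->
    `|taylor_remainder w (p i) y s| <= C * s ^+ 2.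
Proof.
apply: uniform_bound => [i a b ab pa y s yz /[dup] s01 /andP[s0 _] | i].
  by apply: le_trans (pa y s yz s01) _; rewrite ler_wpM2r ?exprn_ge0.
by have [C [_ pC]] := second_order_mpoly z w (p i); exists C.
Qed.

Lemma sum_sqr_le_sqr_sum (R : realDomainType) (I : Type) (s : seq I) (F : I -> R) :
  (forall i, 0 <= F i) -> \sum_(i <- s) F i ^+ 2 <= (\sum_(i <- s) F i) ^+ 2.
Proof.
move=> F0; elim: s => [|a s IH]; first by rewrite !big_nil expr0n.
have S0 : 0 <= \sum_(i <- s) F i by apply: sumr_ge0.
rewrite !big_cons sqrrD -addrA lerD2l; apply: le_trans IH _.
by rewrite lerDr mulrn_wge0 ?mulr_ge0.
Qed.

Section Distances.
Variables (R : realType) (n : nat).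
Implicit Types x y : 'I_n -> R.

Lemma dist2_le_dist1 x y : dist2 x y <= dist1 x y.
Proof.
rewrite /dist2 -(ger0_norm (dist1_ge0 x y)) -sqrtr_sqr.
rewrite ler_sqrt ?exprn_ge0 ?dist1_ge0 //.
rewrite (eq_bigr (fun k => `|x k - y k| ^+ 2)) => [|k _].
  exact: sum_sqr_le_sqr_sum.
by rewrite real_normK ?num_real.
Qed.

Lemma ler_dist2 x y k : `|x k - y k| <= dist2 x y.
Proof.
rewrite /dist2 -sqrtr_sqr ler_sqrt ?sumr_ge0 // => [|j _]; last exact: sqr_ge0.
by rewrite (bigD1 k) //= lerDl sumr_ge0 // => j _; rewrite sqr_ge0.
Qed.

Lemma dist1_le_dist2 x y : dist1 x y <= n%:R * dist2 x y.
Proof.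
apply: le_trans (ler_sum _ (fun k _ => ler_dist2 x y k)) _.
by rewrite sumr_const card_ord mulr_natl.
Qed.

End Distances.

Section Violation.
Variables (R : realType) (n r : nat) (g : 'I_r -> {mpoly R[n]}) (y : 'I_n -> R).

Lemma Gviol_ge0 : 0 <= Gviol g y.
Proof. exact: normr_ge0. Qed.

Lemma Gviol_eq : Gviol g y = - \big[Num.min/0]_(i < r) (g i).@[y].
Proof. by rewrite /Gviol ler0_norm // bigmin_le_id. Qed.

Lemma Gviol_lower i : - Gviol g y <= (g i).@[y].
Proof. by rewrite Gviol_eq opprK bigmin_le. Qed.

Lemma Gviol_le a : 0 <= a -> (forall i, - a <= (g i).@[y]) -> Gviol g y <= a.
Proof.
by move=> a0 ga; rewrite Gviol_eq lerNl le_bigmin ?oppr_le0 // => i _; exact: ga.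
Qed.

Lemma Dist_le_dist2 x : semialg g x -> Dist g y <= dist2 y x.
Proof.
move=> xS; apply: ge_inf; last by exists x.
by exists 0 => _ [x' _ <-]; exact: sqrtr_ge0.
Qed.

End Violation.

Section Restoration.
Variables (R : realType) (n r : nat) (g : 'I_r -> {mpoly R[n]}) (z w : 'I_n -> R).
Variables (L L' C m : R).
Hypothesis zS : semialg g z.
Hypothesis dderiv_active : forall i, (g i).@[z] = 0 -> (dderiv w (g i)).@[z] = 1.
Hypothesis inactive_ge : forall i, (g i).@[z] != 0 -> m <= (g i).@[z].
Hypotheses (L_ge0 : 0 <= L) (C_ge0 : 0 <= C).
Hypothesis g_lipschitz : forall i x, dist1 x z <= 1 + norm1 w ->
  `|(g i).@[x] - (g i).@[z]| <= L * dist1 x z.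
Hypothesis dderiv_lipschitz : forall i y, dist1 y z <= 1 ->
  `|(dderiv w (g i)).@[y] - (dderiv w (g i)).@[z]| <= L' * dist1 y z.
Hypothesis g_taylor : forall i y s, dist1 y z <= 1 -> 0 <= s <= 1 ->
  `|taylor_remainder w (g i) y s| <= C * s ^+ 2.

Variable y : 'I_n -> R.
Hypothesis yz1 : dist1 y z <= 1.
Let G := Gviol g y.
Let x := shift w y (4 * G).

Lemma Gviol_le_lipschitz : G <= L * dist1 y z.
Proof.
apply: Gviol_le => [|i]; first by rewrite mulr_ge0 ?dist1_ge0.
have yz : dist1 y z <= 1 + norm1 w by rewrite (le_trans yz1) // lerDl norm1_ge0.
by have := g_lipschitz i yz; have := zS i; rewrite ler_norml; lra.
Qed.

Lemma restore_active i : (g i).@[z] = 0 ->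
  2 * L' * dist1 y z <= 1 -> 4 * G <= 1 -> 16 * C * G <= 1 -> 0 <= (g i).@[x].
Proof.
move=> gz0 L'yz G1 CG1.
have G0 : 0 <= G := Gviol_ge0 g y.
have D_ge : 1 / 2 <= (dderiv w (g i)).@[y].
  by have := dderiv_lipschitz i yz1; rewrite dderiv_active // ler_norml; lra.
have sD : 2 * G <= 4 * G * (dderiv w (g i)).@[y] by nra.
have CsG : C * (4 * G) ^+ 2 <= G by nra.
have s01 : 0 <= 4 * G <= 1 by apply/andP; split; lra.
have := g_taylor i yz1 s01; have := Gviol_lower g y i.
by rewrite /taylor_remainder -/x -/G ler_norml; lra.
Qed.

Lemma restore_inactive i : (g i).@[z] != 0 ->
  4 * G <= 1 -> L * (dist1 y z + 4 * G * norm1 w) <= m -> 0 <= (g i).@[x].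
Proof.
move=> gz G1 Lxz.
have G0 : 0 <= G := Gviol_ge0 g y.
have xz : dist1 x z <= dist1 y z + 4 * G * norm1 w.
  by rewrite (le_trans (dist1_shift_le _ _ _ _)) // ger0_norm ?mulr_ge0.
have xz1 : dist1 x z <= 1 + norm1 w.
  by rewrite (le_trans xz) // lerD // ler_piMl ?norm1_ge0.
have := g_lipschitz i xz1; have := inactive_ge gz.
have : L * dist1 x z <= L * (dist1 y z + 4 * G * norm1 w) by rewrite ler_wpM2l.
by rewrite ler_norml; lra.
Qed.

Lemma restore_semialg :
  4 * L * dist1 y z <= 1 -> 2 * L' * dist1 y z <= 1 -> 16 * C * L * dist1 y z <= 1 ->
  L * (1 + 4 * L * norm1 w) * dist1 y z <= m -> semialg g x.
Proof.
move=> h1 h2 h3 h4 i.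
have GL := Gviol_le_lipschitz.
have G1 : 4 * G <= 1 by lra.
case: (eqVneq (g i).@[z] 0) => [gz | gz].
  apply: restore_active => //.
  by apply: le_trans h3; rewrite -!mulrA !ler_wpM2l.
apply: restore_inactive => //.
have : 4 * G * norm1 w <= 4 * (L * dist1 y z) * norm1 w.
  by rewrite ler_wpM2r ?norm1_ge0 // ler_wpM2l.
by move=> GLw; apply: le_trans h4; rewrite -[in X in _ <= X]mulrA ler_wpM2l //; lra.
Qed.

End Restoration.

Lemma restoration (R : realType) n r (g : 'I_r -> {mpoly R[n]}) (z w : 'I_n -> R) :
  semialg g z -> (forall i, (g i).@[z] = 0 -> (dderiv w (g i)).@[z] = 1) ->
  exists delta, 0 < delta /\
    forall y, dist1 y z <= delta -> semialg g (shift w y (4 * Gviol g y)).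
Proof.
move=> zS active.
have [L [L0 gL]] := lipschitz_at_family g z (addr_ge0 ler01 (norm1_ge0 w)).
have [L' [L'0 dgL]] := lipschitz_at_family (fun i => dderiv w (g i)) z ler01.
have [C [C0 gC]] := second_order_family g z w.
pose m := \big[Num.min/1]_(i | (g i).@[z] != 0) (g i).@[z].
have m0 : 0 < m by apply: lt_bigmin => // i gz; rewrite lt0r gz zS.
have m_le i : (g i).@[z] != 0 -> m <= (g i).@[z] by move=> gz; rewrite bigmin_le_cond.
pose K := L * (1 + 4 * L * norm1 w) / m.
have K0 : 0 <= K by rewrite /K divr_ge0 ?(ltW m0) //; have := norm1_ge0 w; nra.
have CL0 : 0 <= C * L by rewrite mulr_ge0.
pose Q := 1 + 4 * L + 2 * L' + 16 * C * L + K.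
have Q0 : 0 < Q by rewrite /Q; lra.
exists Q^-1; split=> [|y yQ]; first by rewrite invr_gt0.
have small a : 0 <= a -> a <= Q -> a * dist1 y z <= 1.
  move=> a0 aQ; apply: le_trans (ler_pM a0 (dist1_ge0 y z) aQ yQ) _.
  by rewrite mulfV ?gt_eqF.
have yz1 : dist1 y z <= 1 by rewrite -[dist1 y z]mul1r small // /Q; lra.
apply: (restore_semialg zS active m_le L0 C0 gL _ gC yz1).
- by move=> i x xz; exact: dgL.
- by rewrite small // /Q; lra.
- by rewrite small // /Q; lra.
- by rewrite small // ?mulr_ge0 // /Q; lra.
- by rewrite -[m in _ <= m]mul1r -ler_pdivrMr // mulrAC -/K small // /Q; lra.
Qed.

Lemma free_exists_dual_one (F : fieldType) n (X : seq 'rV[F]_n) :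
  free X -> exists w : 'cV[F]_n, forall v, v \in X -> (v *m w) 0 0 = 1.
Proof.
move=> freeX; pose A := \matrix_(j < size X) X`_j.
have /row_freeP [B AB] : row_free A.
  rewrite -kermx_eq0; apply/rowV0P => u /sub_kermxP uA0; apply/rowP => i.
  move: freeX; rewrite mxE -[X]/(tval (in_tuple X)) => /vector.freeP; apply.
  by rewrite -[in RHS]uA0 mulmx_sum_row; apply: eq_bigr => j _; rewrite rowK.
exists (B *m const_mx 1) => v vX.
have vA : v = row (Ordinal (etrans (index_mem v X) vX)) A by rewrite rowK nth_index.
by rewrite vA mulmxA -row_mul AB -row_mul mul1mx !mxE.
Qed.

Lemma CQC_direction (R : realType) n r (g : 'I_r -> {mpoly R[n]}) z : CQC g z ->
  exists w : 'I_n -> R, forall i, (g i).@[z] = 0 -> (dderiv w (g i)).@[z] = 1.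
Proof.
move=> /free_exists_dual_one [c dual]; exists (fun k => c k 0) => i gz.
have active : grad (g i) z \in [seq grad (g i) z | i <- enum 'I_r & (g i).@[z] == 0].
  by apply: map_f; rewrite mem_filter mem_enum gz eqxx.
rewrite -(dual _ active) mxE meval_dderiv.
by apply: eq_bigr => k _; rewrite mxE mulrC.
Qed.

Theorem mainTheorem12 (R : realType) (n r : nat) (g : 'I_r -> {mpoly R[n]})
  (z : 'I_n -> R) (hzS : semialg g z) (hcqc : CQC g z) :
  exists eps c : R, 0 < eps /\ 0 < c /\
    forall y : 'I_n -> R, in_cube y ->
      Dist g y = dist2 y z -> Dist g y <= eps ->
      Dist g y <= c * Gviol g y.
Proof.
have [w active] := CQC_direction hcqc.
have [delta [delta0 restore]] := restoration hzS active.
have n1 : 0 < n%:R + 1 :> R by rewrite ltr_wpDl.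
exists (delta / (n%:R + 1)), (4 * norm1 w + 1).
split; first by rewrite divr_gt0.
split; first by have := norm1_ge0 w; lra.
move=> y _ Dyz Dy_eps.
have yz : dist1 y z <= delta.
  apply: le_trans (dist1_le_dist2 y z) _; rewrite -Dyz.
  apply: le_trans (ler_wpM2l (ler0n _ n) Dy_eps) _.
  by rewrite mulrCA ger_pMr // ler_pdivrMr // mul1r lerDl.
apply: le_trans (Dist_le_dist2 y (restore y yz)) _.
apply: le_trans (dist2_le_dist1 _ _) _.
have G0 := Gviol_ge0 g y; have := norm1_ge0 w.
by rewrite dist1_shift ger0_norm ?mulr_ge0 //; nra.
Qed.
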